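(* Let $A \in \{0,1\}^{X\times Y}$ be a combinatorial channel and let $E=\{(x,y) : A_{x,y}=1\}$ be the edge set of its channel graph. Then \[ |X| + |Y| - |E| \le p(A). \] Moreover, for any nonempty finite sets $X$, $Y$ and any nonempty $R \subseteq Y$ with $|R| \le |X|$, there is a combinatorial channel $A \in \{0,1\}^{X\times Y}$ whose edge set satisfies $|E| = |X| + |Y| - |R|$ and such that $R$ is an output covering in $A$ (every $x \in X$ has $A_{x,y}=1$ for some $y \in R$).
   Context: A combinatorial channel is a matrix $A \in \{0,1\}^{X\times Y}$ ($X,Y$ finite) in which every row and column contains a $1$. For $y\in Y$, $N(y)=\{x : A_{x,y}=1\}$. A code is a set $C\subseteq X$ with $|N(y)\cap C|\le 1$ for all $y$, and $p(A)$ is the maximum size of a code. *)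

From mathcomp Require Import all_boot.
Set Implicit Arguments. Unset Strict Implicit. Unset Printing Implicit Defensive.

Definition is_channel (X Y : finType) (A : X -> Y -> bool) : Prop :=
  (forall x : X, exists y : Y, A x y) /\ (forall y : Y, exists x : X, A x y).

Definition N (X Y : finType) (A : X -> Y -> bool) (y : Y) : {set X} :=
  [set x | A x y].

Definition is_code (X Y : finType) (A : X -> Y -> bool) (C : {set X}) : bool :=
  [forall y : Y, #|N A y :&: C| <= 1].

Definition p (X Y : finType) (A : X -> Y -> bool) : nat :=
  \max_(C : {set X} | is_code A C) #|C|.

Definition edges (X Y : finType) (A : X -> Y -> bool) : {set X * Y} :=
  [set e | A e.1 e.2].

Definition output_covering (X Y : finType) (A : X -> Y -> bool) (R : {set Y}) : Prop :=
  forall x : X, exists2 y, y \in R & A x y.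

From mathcomp Require Import all_boot.

Set Implicit Arguments.
Unset Strict Implicit.
Unset Printing Implicit Defensive.

(* Lower bound: for an arbitrary relation A, #|X| + #|outputs A| <= p A + #|edges A|,
   where [outputs A] are the outputs with at least one edge.  Delete the edges
   one at a time: deleting an edge raises [p] by at most one, and does not raise
   it at all when the edge is the only one at its output -- but then that output
   is lost.  With no edges left every set is a code.
   Tightness: map [X] onto [R] by a function [f] and join every output outside
   [R] to one fixed input; the edge set is the graph of [f] plus [#|Y| - #|R|]
   further edges. *)

Section EdgeDeletion.
Variables (X Y : finType).
Implicit Types (A : X -> Y -> bool) (C : {set X}).

Definition remove_edge A (x0 : X) (y0 : Y) : X -> Y -> bool :=
  fun x y => A x y && ((x, y) != (x0, y0)).

Definition outputs A : {set Y} := [set y | [exists x, A x y]].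

Lemma code_leq_p A C : is_code A C -> #|C| <= p A.
Proof. exact: (leq_bigmax_cond (F := fun C => #|C|)). Qed.

Lemma card_leq_p_edgeless A : (forall x y, ~~ A x y) -> #|X| <= p A.
Proof.
move=> A0; rewrite -cardsT code_leq_p //; apply/forallP => y.
rewrite (_ : _ :&: _ = set0) ?cards0 //.
by apply/setP => x; rewrite !inE (negbTE (A0 x y)).
Qed.

Lemma p_remove_edge A x0 y0 : p (remove_edge A x0 y0) <= (p A).+1.
Proof.
apply/bigmax_leqP => C codeC.
have codeCx0 : is_code A (C :\ x0).
  apply/forallP => y; apply: leq_trans (forallP codeC y).
  apply/subset_leq_card/subsetP => x; rewrite !inE /remove_edge.
  by case/andP=> Axy /andP[x_x0 ->]; rewrite Axy /= xpair_eqE negb_and x_x0.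
by rewrite (cardsD1 x0 C) -add1n leq_add ?leq_b1 ?code_leq_p.
Qed.

Lemma p_remove_pendant_edge A x0 y0 :
  (forall x, A x y0 -> x = x0) -> p (remove_edge A x0 y0) <= p A.
Proof.
move=> pendant; apply/bigmax_leqP => C codeC; apply: code_leq_p.
apply/forallP => y; have [->|y_y0] := eqVneq y y0.
  rewrite -(cards1 x0); apply/subset_leq_card/subsetP => x.
  by rewrite !inE => /andP[/pendant -> _].
apply: leq_trans (forallP codeC y); apply/subset_leq_card/subsetP => x.
by rewrite !inE /remove_edge xpair_eqE (negbTE y_y0) andbF => /andP[-> ->].
Qed.

Lemma card_edges_remove_edge A x0 y0 : A x0 y0 ->
  #|edges A| = #|edges (remove_edge A x0 y0)|.+1.
Proof.
move=> Ax0y0; rewrite (cardsD1 (x0, y0)) inE Ax0y0; congr _.+1.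
by apply: eq_card => -[x y]; rewrite !inE andbC.
Qed.

Lemma outputs_remove_edge A x0 y0 x1 : A x1 y0 -> x1 != x0 ->
  outputs (remove_edge A x0 y0) = outputs A.
Proof.
move=> Ax1y0 x1_x0; apply/setP => y; rewrite !inE.
apply/existsP/existsP => -[x Axy]; first by exists x; case/andP: Axy.
have [y_y0|y_y0] := eqVneq y y0.
  by exists x1; rewrite /remove_edge y_y0 Ax1y0 xpair_eqE (negbTE x1_x0).
by exists x; rewrite /remove_edge Axy xpair_eqE (negbTE y_y0) andbF.
Qed.

Lemma card_outputs_remove_pendant_edge A x0 y0 :
  A x0 y0 -> (forall x, A x y0 -> x = x0) ->
  #|outputs A| = #|outputs (remove_edge A x0 y0)|.+1.
Proof.
move=> Ax0y0 pendant.
have y0_lost : y0 \notin outputs (remove_edge A x0 y0).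
  by rewrite inE; apply/existsP => -[x /andP[/pendant -> /eqP]].
suff -> : outputs A = y0 |: outputs (remove_edge A x0 y0) by rewrite cardsU1 y0_lost.
apply/setP => y; rewrite !inE.
have [->|y_y0] := eqVneq y y0; first by apply/existsP; exists x0.
by apply: eq_existsb => x; rewrite /remove_edge xpair_eqE (negbTE y_y0) andbF andbT.
Qed.

Lemma card_outputs_leq_p_edges A : #|X| + #|outputs A| <= p A + #|edges A|.
Proof.
move cardE: #|edges A| => n; elim: n A cardE => [|n IHn] A cardE.
  have A0 x y : ~~ A x y.
    apply/negP => Axy; suff : 0 < #|edges A| by rewrite cardE.
    by apply/card_gt0P; exists (x, y); rewrite inE.
  have -> : outputs A = set0.
    by apply/setP => y; rewrite !inE; apply/existsP => -[x]; apply/negP.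
  by rewrite cards0 !addn0 card_leq_p_edgeless.
have [[x0 y0]] : exists e, e \in edges A by apply/card_gt0P; rewrite cardE.
rewrite inE /= => Ax0y0; set A' := remove_edge A x0 y0.
have cardE' : #|edges A'| = n.
  by move: cardE; rewrite (card_edges_remove_edge Ax0y0) => -[].
have IH := IHn A' cardE'.
have [x1 /andP[Ax1y0 x1_x0]|pendant] := pickP (fun x => A x y0 && (x != x0)).
  rewrite -/A' (outputs_remove_edge Ax1y0 x1_x0) in IH.
  by rewrite addnS -addSn (leq_trans IH) // leq_add2r p_remove_edge.
have {}pendant x : A x y0 -> x = x0.
  by move=> Axy0; apply/eqP; move: (pendant x); rewrite Axy0 /= => /negbFE.
rewrite (card_outputs_remove_pendant_edge Ax0y0 pendant) addnS addnS ltnS.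
by rewrite (leq_trans IH) // leq_add2r p_remove_pendant_edge.
Qed.

Lemma outputs_channel A : is_channel A -> outputs A = setT.
Proof.
by case=> _ colA; apply/setP => y; rewrite !inE; apply/existsP; exact: colA.
Qed.

End EdgeDeletion.

Lemma exists_onto (X Y : finType) (R : {set Y}) :
  R != set0 -> #|R| <= #|X| -> exists f : X -> Y, f @: X = R.
Proof.
case/set0Pn => r0 Rr0 RleX.
pose f (x : X) := nth r0 (enum R) (enum_rank x).
exists f; apply/setP => y; apply/imsetP/idP => [[x _ ->]|Ry].
  rewrite /f; have [lt_xR|le_Rx] := ltnP (enum_rank x) (size (enum R)).
    by rewrite -mem_enum mem_nth.
  by rewrite nth_default.
have iy_X : index y (enum R) < #|X|.
  by rewrite (leq_trans _ RleX) // cardE index_mem mem_enum.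
exists (enum_val (Ordinal iy_X)) => //.
by rewrite /f enum_valK nth_index ?mem_enum.
Qed.

Section TightChannel.
Variables (X Y : finType) (R : {set Y}) (f : X -> Y) (x0 : X).
Hypothesis f_onto : f @: X = R.

Definition tight_channel (x : X) (y : Y) : bool :=
  (y == f x) || ((y \notin R) && (x == x0)).

Lemma f_in_R x : f x \in R.
Proof. by rewrite -f_onto imset_f. Qed.

Lemma tight_channel_is_channel : is_channel tight_channel.
Proof.
split=> [x|y]; first by exists (f x); rewrite /tight_channel eqxx.
have [Ry|nRy] := boolP (y \in R).
  by move: Ry; rewrite -f_onto => /imsetP[x _ ->]; exists x; rewrite /tight_channel eqxx.
by exists x0; rewrite /tight_channel nRy eqxx orbT.
Qed.

Lemma edges_tight_channel :
  edges tight_channel = [set (x, f x) | x : X] :|: [set (x0, y) | y in ~: R].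
Proof.
apply/setP => -[x y]; rewrite !inE /tight_channel /=; apply/idP/idP.
  case/orP=> [/eqP->|/andP[nRy /eqP->]]; apply/orP; [left|right]; apply/imsetP.
    by exists x.
  by exists y; rewrite ?inE.
case/orP=> /imsetP[z z_in [-> ->]]; first by rewrite eqxx.
by move: z_in; rewrite inE => ->; rewrite eqxx orbT.
Qed.

Lemma card_edges_tight_channel : #|edges tight_channel| = #|X| + #|Y| - #|R|.
Proof.
rewrite edges_tight_channel cardsU.
have -> : [set (x, f x) | x : X] :&: [set (x0, y) | y in ~: R] = set0.
  apply/setP => -[x y]; rewrite !inE; apply/andP => -[/imsetP[z _ [_ ->]]].
  by case/imsetP => w; rewrite inE => nRw [_ fz_w]; rewrite -fz_w f_in_R in nRw.
rewrite cards0 subn0 !card_imset; try by move=> a b [].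
by rewrite (cardsCs (~: R)) setCK addnBA ?max_card.
Qed.

Lemma tight_channel_output_covering : output_covering tight_channel R.
Proof. by move=> x; exists (f x); rewrite ?f_in_R // /tight_channel eqxx. Qed.

End TightChannel.

Theorem lemma9 :
  (forall (X Y : finType) (A : X -> Y -> bool),
      is_channel A -> #|X| + #|Y| - #|edges A| <= p A)
  /\
  (forall (X Y : finType) (R : {set Y}),
      0 < #|X| -> 0 < #|Y| -> R != set0 -> #|R| <= #|X| ->
      exists A : X -> Y -> bool,
        [/\ is_channel A, #|edges A| = #|X| + #|Y| - #|R| & output_covering A R]).
Proof.
split=> [X Y A chA | X Y R X_gt0 _ R_neq0 RleX].
  rewrite -(cardsT Y) -(outputs_channel chA) leq_subLR [#|edges A| + _]addnC.
  exact: card_outputs_leq_p_edges.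
have [x0 _] := card_gt0P X_gt0.
have [f f_onto] := exists_onto R_neq0 RleX.
exists (tight_channel R f x0); split.
- exact: tight_channel_is_channel.
- exact: card_edges_tight_channel.
- exact: tight_channel_output_covering.
Qed.
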